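(* For every complex number $a$ of modulus one, there is no $6\times 6$ complex Hadamard matrix all of whose entries lie in $\{1,a,-a^2\}$.
   Context: A complex Hadamard matrix (CHM) of order $n$ is an $n\times n$ complex matrix $H$ all of whose entries have modulus one and which satisfies $HH^\dagger=nI$. *)

From HB Require Import structures.
From mathcomp Require Import all_boot all_order all_algebra.
From mathcomp Require Import complex.
From mathcomp Require Import reals.
Set Implicit Arguments. Unset Strict Implicit. Unset Printing Implicit Defensive.
Import Order.TTheory GRing.Theory Num.Theory.
Local Open Scope ring_scope.
Local Open Scope complex_scope.

Definition ctrmx (R : realType) (n : nat) (H : 'M[R[i]]_n) : 'M[R[i]]_n :=
  \matrix_(i < n, j < n) (H j i)^*.

Definition is_CHM (R : realType) (n : nat) (H : 'M[R[i]]_n) : Prop :=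
  (forall i j, `|H i j| = 1) /\ H *m ctrmx H = (n%:R) %:M.

From HB Require Import structures.
From mathcomp Require Import all_boot all_order all_algebra.
From mathcomp Require Import complex.
From mathcomp Require Import reals.
From mathcomp Require Import ring lra.
Set Implicit Arguments. Unset Strict Implicit. Unset Printing Implicit Defensive.
Import Order.TTheory GRing.Theory Num.Theory.
Local Open Scope ring_scope.

(** Write a = x + iy with x^2 + y^2 = 1.  If y = 0 the entries are +-1 and the
    usual parity argument on three rows shows that 4 divides the order.
    Otherwise, using y^2 = 1 - x^2, the inner product of two rows with entries
    in {1, a, -a^2} is p(x) + i y q(x) with p, q integer polynomials of degree
    at most 2 and 1, so orthogonality forces x to be a common root of such
    polynomials in (-1, 1).  An exhaustive search over five rows (the columns
    may be permuted so that the first row is sorted), which keeps track of the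
    possible values of x, finds no five mutually orthogonal rows. *)

(* [CExpr r0 r1 r2 i0 i1] encodes (r0 + r1 x + r2 x^2) + i y (i0 + i1 x). *)
Record cexpr := CExpr { re0 : int; re1 : int; re2 : int; im0 : int; im1 : int }.

Definition cexpr0 := CExpr 0 0 0 0 0.

Definition cexpr_add (e f : cexpr) : cexpr :=
  CExpr (re0 e + re0 f) (re1 e + re1 f) (re2 e + re2 f)
        (im0 e + im0 f) (im1 e + im1 f).

(* The entries 1, a, -a^2 are coded by 0, 1, 2; this is the code of
   e_s * (e_t)^*, reduced with x^2 + y^2 = 1. *)
Definition entry_prod (s t : nat) : cexpr :=
  match s, t with
  | 1, 0 => CExpr 0 1 0 1 0
  | 0, 1 => CExpr 0 1 0 (-1) 0
  | 2, 0 => CExpr 1 0 (-2) 0 (-2)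
  | 0, 2 => CExpr 1 0 (-2) 0 2
  | 1, 2 => CExpr 0 (-1) 0 1 0
  | 2, 1 => CExpr 0 (-1) 0 (-1) 0
  | _, _ => CExpr 1 0 0 0 0
  end.

Fixpoint row_dot (u v : seq nat) : cexpr :=
  match u, v with
  | s :: u', t :: v' => cexpr_add (entry_prod s t) (row_dot u' v')
  | _, _ => cexpr0
  end.

(* What is known about x: nothing, [x d = n], or [A x^2 + B x + C = 0]. *)
Inductive re_constr := ReAny | ReRatio of int & int | ReRoot of int & int & int.

(* Since |x| < 1, [x d = n] forces n^2 < d^2, and a root of A x^2 + B x + C
   forces |C| <= |A| + |B|; other candidates are discarded. *)
Definition re_ratio (n d : int) : option re_constr :=
  if n * n < d * d then Some (ReRatio n d) else None.

Definition re_root (A B C : int) : option re_constr :=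
  if `|A| + `|B| < `|C| then None else Some (ReRoot A B C).

Definition meet_lin (e0 e1 : int) (c : re_constr) : option re_constr :=
  if e1 == 0 then (if e0 == 0 then Some c else None) else
  match c with
  | ReAny => re_ratio (- e0) e1
  | ReRatio n d => if e0 * d + e1 * n == 0 then Some c else None
  (* e1^2 times the quadratic at x = -e0/e1 *)
  | ReRoot A B C =>
      if A * e0 * e0 - B * e0 * e1 + C * e1 * e1 == 0
      then re_ratio (- e0) e1 else None
  end.

Definition meet_quad (r0 r1 r2 : int) (c : re_constr) : option re_constr :=
  if r2 == 0 then meet_lin r0 r1 c else
  match c with
  | ReAny => re_root r2 r1 r0
  | ReRatio n d =>
      if r0 * d * d + r1 * n * d + r2 * n * n == 0 then Some c else None
  (* eliminate x^2 between the two quadratics *)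
  | ReRoot A B C => meet_lin (r2 * C - A * r0) (r2 * B - A * r1) c
  end.

Definition meet_orth (c : re_constr) (u v : seq nat) : option re_constr :=
  let e := row_dot u v in
  obind (meet_quad (re0 e) (re1 e) (re2 e)) (meet_lin (im0 e) (im1 e) c).

Fixpoint meet_rows (c : re_constr) (rows : seq (seq nat)) (u : seq nat) :=
  if rows is r :: rows'
  then obind (fun c' => meet_rows c' rows' u) (meet_orth c r u)
  else Some c.

Fixpoint words3 (m : nat) : seq (seq nat) :=
  if m is m'.+1 then [seq s :: w | s <- [:: 0; 1; 2]%N, w <- words3 m']
  else [:: [::]].

Lemma words3P m w : size w = m -> all (fun s => s < 3)%N w -> w \in words3 m.
Proof.
elim: m w => [|m IHm] [|s w] //= [sz_w] /andP[s_lt3 w_lt3].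
have w_in := IHm w sz_w w_lt3.
by case: s s_lt3 => [|[|[|]]] // _; rewrite !mem_cat map_f ?orbT.
Qed.

(* [no_orth_ext m n rows c] certifies that [rows] cannot be extended by [n]
   words of length [m] orthogonal to [rows] and to each other, for any x
   satisfying [c]. *)
Fixpoint no_orth_ext (m n : nat) (rows : seq (seq nat)) (c : re_constr) :=
  if n is n'.+1 then
    all (fun u => if meet_rows c rows u is Some c'
                  then no_orth_ext m n' (rcons rows u) c' else true)
        (words3 m)
  else false.

Definition no_five_orth_rows : bool :=
  all (fun u => no_orth_ext 6 4 [:: u] ReAny) [seq w <- words3 6 | sorted leq w].

Lemma no_five_orth_rowsP : no_five_orth_rows.
Proof. by vm_compute. Qed.

Section ReConstraints.

Variables (R : realFieldType) (x : R).
Hypothesis x_sqr_lt1 : x ^+ 2 < 1.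

Definition re_holds (c : re_constr) : Prop :=
  match c with
  | ReAny => True
  | ReRatio n d => x * d%:~R = n%:~R
  | ReRoot A B C => A%:~R * x ^+ 2 + B%:~R * x + C%:~R = 0
  end.

Definition oholds (oc : option re_constr) : Prop :=
  if oc is Some c then re_holds c else False.

Definition cexpr_re (e : cexpr) : R :=
  (re0 e)%:~R + (re1 e)%:~R * x + (re2 e)%:~R * x ^+ 2.

Definition cexpr_im (e : cexpr) : R := (im0 e)%:~R + (im1 e)%:~R * x.

Definition orth_words (u v : seq nat) : bool :=
  (cexpr_re (row_dot u v) == 0) && (cexpr_im (row_dot u v) == 0).

Lemma re_ratio_sound n d :
  d != 0 -> x * d%:~R = n%:~R -> oholds (re_ratio n d).
Proof.
move=> d_neq0 xdn; rewrite /re_ratio -(ltr_int R) !intrM -xdn.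
suff -> : x * d%:~R * (x * d%:~R) < d%:~R * d%:~R by [].
have d2_gt0 : 0 < (d%:~R : R) ^+ 2 by rewrite exprn_even_gt0 ?intr_eq0.
rewrite -subr_gt0 (_ : _ - _ = (1 - x ^+ 2) * d%:~R ^+ 2); last by ring.
by rewrite mulr_gt0 ?subr_gt0.
Qed.

Lemma re_root_sound A B C : re_holds (ReRoot A B C) -> oholds (re_root A B C).
Proof.
move=> /= root_x; rewrite /re_root.
suff -> : (`|A| + `|B| < `|C|) = false by [].
apply/negbTE; rewrite -leNgt -(ler_int R) intrD !intr_norm.
have x_le1 : `|x| <= 1.
  by rewrite ltW // -(expr_lt1 (n := 2)) // real_normK ?num_real.
have -> : C%:~R = - (A%:~R * x ^+ 2 + B%:~R * x) :> R.
  by apply/eqP; rewrite -addr_eq0 addrC root_x.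
rewrite normrN; apply: (le_trans (ler_normD _ _)); rewrite !normrM -expr2.
by apply: lerD; rewrite ler_piMr // exprn_ile1.
Qed.

Lemma meet_lin_sound e0 e1 c :
  re_holds c -> e0%:~R + e1%:~R * x = 0 -> oholds (meet_lin e0 e1 c).
Proof.
move=> holds_c lin_x; rewrite /meet_lin.
have [e1_0|e1_neq0] := eqVneq e1 0.
  by move: lin_x; rewrite e1_0 mul0r addr0 => /eqP; rewrite intr_eq0 => ->.
have ratio_x : x * e1%:~R = (- e0)%:~R.
  by apply/eqP; rewrite intrN -addr_eq0 mulrC addrC lin_x.
case: c holds_c => [_|n d|A B C] /=; first exact: re_ratio_sound.
  move=> xdn; rewrite -(intr_eq0 R) intrD !intrM -xdn.
  rewrite (_ : _ + _ = d%:~R * (e0%:~R + e1%:~R * x)); last by ring.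
  by rewrite lin_x mulr0 eqxx.
move=> root_x; rewrite -(intr_eq0 R) intrD intrB !intrM.
rewrite (_ : _ + _ = e1%:~R ^+ 2 * (A%:~R * x ^+ 2 + B%:~R * x + C%:~R)
   + (e0%:~R + e1%:~R * x) * (A%:~R * (e0%:~R - e1%:~R * x) - B%:~R * e1%:~R));
  last by ring.
by rewrite root_x lin_x !mulr0 mul0r addr0 eqxx; apply: re_ratio_sound.
Qed.

Lemma meet_quad_sound r0 r1 r2 c : re_holds c ->
  r0%:~R + r1%:~R * x + r2%:~R * x ^+ 2 = 0 -> oholds (meet_quad r0 r1 r2 c).
Proof.
move=> holds_c quad_x; rewrite /meet_quad.
have [r2_0|r2_neq0] := eqVneq r2 0.
  by apply: meet_lin_sound; rewrite // -quad_x r2_0 mul0r addr0.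
case: c holds_c => [_|n d|A B C] /=.
- by apply: re_root_sound; rewrite /= -quad_x; ring.
- move=> xdn; rewrite -(intr_eq0 R) !intrD !intrM -xdn.
  rewrite (_ : _ + _ = d%:~R ^+ 2 * (r0%:~R + r1%:~R * x + r2%:~R * x ^+ 2));
    last by ring.
  by rewrite quad_x mulr0 eqxx.
- move=> root_x; apply: meet_lin_sound; rewrite //= !intrB !intrM.
  rewrite (_ : _ + _ = r2%:~R * (A%:~R * x ^+ 2 + B%:~R * x + C%:~R)
                       - A%:~R * (r0%:~R + r1%:~R * x + r2%:~R * x ^+ 2));
    last by ring.
  by rewrite root_x quad_x !mulr0 subr0.
Qed.

Lemma meet_orth_sound c u v :
  re_holds c -> orth_words u v -> oholds (meet_orth c u v).
Proof.
move=> holds_c /andP[/eqP re_0 /eqP im_0]; rewrite /meet_orth.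
have := meet_lin_sound holds_c im_0.
by case: meet_lin => //= c' holds_c'; apply: meet_quad_sound.
Qed.

Lemma meet_rows_sound c rows u : re_holds c ->
  all (orth_words^~ u) rows -> oholds (meet_rows c rows u).
Proof.
elim: rows c => [|r rows IHrows] c holds_c //= /andP[orth_r orth_rows].
have := meet_orth_sound holds_c orth_r.
by case: meet_orth => //= c' holds_c'; apply: IHrows.
Qed.

Lemma no_orth_ext_sound m rows ext c : re_holds c ->
  {subset ext <= words3 m} -> pairwise orth_words (rows ++ ext) ->
  no_orth_ext m (size ext) rows c = false.
Proof.
elim: ext rows c => [//|u ext IHext] rows c holds_c ext_words orth_all /=.
apply/negbTE/allPn; exists u; first by apply: ext_words; rewrite inE eqxx.
have orth_u : all (orth_words^~ u) rows.
  move: orth_all; rewrite pairwise_cat => /and3P[/allrelP orth_rows_ext _ _].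
  by apply/allP => r r_in; apply: orth_rows_ext; rewrite ?inE ?eqxx.
have := meet_rows_sound holds_c orth_u.
case: meet_rows => //= c' holds_c'; rewrite IHext //.
- by move=> w w_in; apply: ext_words; rewrite inE w_in orbT.
- by rewrite cat_rcons.
Qed.

End ReConstraints.

Local Open Scope complex_scope.

Lemma normc_eq1 (R : rcfType) (x y : R) : `|x +i* y| = 1 -> x ^+ 2 + y ^+ 2 = 1.
Proof.
move=> xy_unit; have := sqr_normc (x +i* y); rewrite xy_unit expr1n; simpc.
by case=> ->; rewrite !expr2.
Qed.

Lemma row_dot_ctrmx (R : realType) n (H : 'M[R[i]]_n) (c : R[i]) i j :
  H *m ctrmx H = c%:M -> \sum_k H i k * (H j k)^* = c *+ (i == j).
Proof.
move=> /(congr1 (fun M : 'M_n => M i j)); rewrite !mxE => <-.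
by apply: eq_bigr => k _; rewrite mxE.
Qed.

Lemma pm1_mul_conj (R : rcfType) (u v w : R[i]) :
  u = 1 \/ u = -1 -> v = 1 \/ v = -1 -> w = 1 \/ w = -1 ->
  (u + v) * (u + w)^* = (4 * ((u == v) && (u == w)))%:R.
Proof.
have N1_neq1 : (-1 : R[i]) != 1.
  by rewrite -subr_eq0 -opprD oppr_eq0 -(natrD _ 1 1) pnatr_eq0.
have one_neqN1 : (1 : R[i]) != -1 by rewrite eq_sym.
move=> [] -> [] -> [] ->; rewrite ?rmorphN1 ?rmorph1 ?eqxx
  ?(negbTE N1_neq1) ?(negbTE one_neqN1) /=; ring.
Qed.

Lemma pm1_hadamard_dvd4 (R : realType) n (H : 'M[R[i]]_n.+3) :
  (forall i j, H i j = 1 \/ H i j = -1) -> H *m ctrmx H = n.+3%:R%:M ->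
  (4 %| n.+3)%N.
Proof.
move=> H_pm1 HH.
pose i1 := @Ordinal n.+3 1 isT; pose i2 := @Ordinal n.+3 2 isT.
have : \sum_k (H ord0 k + H i1 k) * (H ord0 k + H i2 k)^* = n.+3%:R.
  under eq_bigr do rewrite rmorphD mulrDl !mulrDr.
  by rewrite !big_split /= !(row_dot_ctrmx _ _ HH) /= !mulr0n !addr0.
under eq_bigr do rewrite pm1_mul_conj //.
rewrite -natr_sum => /eqP; rewrite eqr_nat => /eqP <-.
by apply: dvdn_sum => k _; apply: dvdn_mulr.
Qed.

Definition unit_entry (R : rcfType) (a : R[i]) (s : nat) : R[i] :=
  match s with 0 => 1 | 1 => a | _ => - a ^+ 2 end.

Definition unit_entry_index (R : rcfType) (a z : R[i]) : nat :=
  if z == 1 then 0%N else if z == a then 1%N else 2%N.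

Lemma unit_entry_index_lt3 (R : rcfType) (a z : R[i]) :
  (unit_entry_index a z < 3)%N.
Proof. by rewrite /unit_entry_index; case: (z == 1); case: (z == a). Qed.

Lemma unit_entry_indexK (R : rcfType) (a z : R[i]) :
  z = 1 \/ z = a \/ z = - a ^+ 2 -> unit_entry a (unit_entry_index a z) = z.
Proof.
rewrite /unit_entry_index; case: eqP => [-> //|z_neq1].
by case: eqP => [-> //|z_neq_a] [/z_neq1|[/z_neq_a|->]].
Qed.

Lemma unit_entry_pm1 (R : rcfType) (a z : R[i]) : a = 1 \/ a = -1 ->
  z = 1 \/ z = a \/ z = - a ^+ 2 -> z = 1 \/ z = -1.
Proof. by case=> -> [|[|]] ->; rewrite ?sqrrN ?expr1n; auto. Qed.

Section UnitEntries.

Variables (R : rcfType) (x y : R).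

Definition cexpr_eval (e : cexpr) : R[i] := cexpr_re x e +i* (y * cexpr_im x e).

Lemma entry_prodE s t : x ^+ 2 + y ^+ 2 = 1 -> (s < 3)%N -> (t < 3)%N ->
  unit_entry (x +i* y) s * (unit_entry (x +i* y) t)^* = cexpr_eval (entry_prod s t).
Proof.
move=> xy_unit.
(* Multiples of the relation that make both components linear in the monomials. *)
have x_unit : x * (x ^+ 2 + y ^+ 2) = x by rewrite xy_unit mulr1.
have y_unit : y * (x ^+ 2 + y ^+ 2) = y by rewrite xy_unit mulr1.
have sqr_unit : (x ^+ 2 + y ^+ 2) ^+ 2 = 1 by rewrite xy_unit expr1n.
case: s => [|[|[|//]]] _; case: t => [|[|[|//]]] _;
  rewrite /cexpr_eval /cexpr_re /cexpr_im /=; simpc; congr (_ +i* _); lra.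
Qed.

Lemma cexpr_eval_add e f :
  cexpr_eval (cexpr_add e f) = cexpr_eval e + cexpr_eval f.
Proof.
rewrite /cexpr_eval /cexpr_re /cexpr_im /= !intrD; simpc.
by congr (_ +i* _); ring.
Qed.

Lemma row_dotE (I : Type) (F G : I -> nat) (ks : seq I) :
  x ^+ 2 + y ^+ 2 = 1 -> (forall k, F k < 3)%N -> (forall k, G k < 3)%N ->
  \sum_(k <- ks) unit_entry (x +i* y) (F k) * (unit_entry (x +i* y) (G k))^*
    = cexpr_eval (row_dot (map F ks) (map G ks)).
Proof.
move=> xy_unit F_lt3 G_lt3; elim: ks => [|k ks IHks].
  by rewrite big_nil /cexpr_eval /cexpr_re /cexpr_im /= !mul0r !addr0 mulr0.
by rewrite big_cons IHks cexpr_eval_add entry_prodE.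
Qed.

Lemma no_five_orth_unit_rows (T : 'I_5 -> 'I_6 -> nat) :
  x ^+ 2 + y ^+ 2 = 1 -> y != 0 ->
  (forall i k, T i k < 3)%N ->
  ~ (forall i j, i != j -> \sum_k unit_entry (x +i* y) (T i k)
                               * (unit_entry (x +i* y) (T j k))^* = 0).
Proof.
move=> xy_unit y_neq0 T_lt3 orthT.
have x_sqr_lt1 : x ^+ 2 < 1.
  have : 0 < y ^+ 2 by rewrite exprn_even_gt0.
  lra.
pose ks := sort (fun k l => T ord0 k <= T ord0 l)%N (enum 'I_6).
pose w i := map (T i) ks.
have ks_perm : perm_eq ks (index_enum 'I_6).
  rewrite perm_sort; apply: uniq_perm; rewrite ?enum_uniq ?index_enum_uniq //.
  by move=> k; rewrite mem_enum mem_index_enum.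
have orth_w i j : i != j -> orth_words x (w i) (w j).
  move=> /orthT; rewrite -(perm_big _ ks_perm) row_dotE //.
  case=> re_0 /eqP; rewrite mulf_eq0 (negbTE y_neq0) /= => im_0.
  by rewrite /orth_words re_0 im_0 eqxx.
have w_words i : w i \in words3 6.
  apply: words3P; first by rewrite size_map size_sort size_enum_ord.
  by apply/allP => s /mapP [k _ ->].
have w0_sorted : sorted leq (w ord0).
  by rewrite sorted_map; apply: sort_sorted => k l; apply: leq_total.
move/allP: no_five_orth_rowsP => /(_ (w ord0)).
rewrite mem_filter w0_sorted w_words => /(_ isT).
pose o k (k_lt5 : (k < 5)%N) := Ordinal k_lt5.
rewrite (@no_orth_ext_sound _ x x_sqr_lt1 6 [:: w ord0]
          [:: w (o 1 isT); w (o 2 isT); w (o 3 isT); w (o 4 isT)] ReAny) //.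
- by move=> u; rewrite mem_seq4 => /or4P[] /eqP ->; apply: w_words.
- by rewrite /= !orth_w.
Qed.

End UnitEntries.

Theorem mainTheorem11 (R : realType) (a : R[i]) :
  `|a| = 1 ->
  ~ exists H : 'M[R[i]]_6,
      is_CHM H /\ forall i j, H i j = 1 \/ H i j = a \/ H i j = - a ^+ 2.
Proof.
case: a => x y /normc_eq1 xy_unit [H [[_ HH] H_entries]].
have [y0|y_neq0] := eqVneq y 0.
  have a_pm1 : x +i* y = 1 \/ x +i* y = -1.
    move: xy_unit; rewrite y0 expr0n addr0 => /eqP; rewrite sqrf_eq1.
    case/orP=> /eqP->; [left | right] => //.
    by apply/eqP; rewrite eq_complex /= oppr0 !eqxx.
  by have := pm1_hadamard_dvd4 (fun i j => unit_entry_pm1 a_pm1 (H_entries i j)) HH.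
pose row5 (i : 'I_5) := widen_ord (leqnSn 5) i.
apply: (@no_five_orth_unit_rows _ x y
          (fun i k => unit_entry_index (x +i* y) (H (row5 i) k)) xy_unit y_neq0).
  by move=> i k; apply: unit_entry_index_lt3.
move=> i j i_neq_j; under eq_bigr do rewrite !unit_entry_indexK //.
rewrite (row_dot_ctrmx _ _ HH).
by have /negbTE -> : row5 i != row5 j by exact: i_neq_j.
Qed.
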